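(* Let $f$ and $g$ be completely multiplicative functions with $|f(n)|,|g(n)|\le1$ for all $n$, suppose $\mathbb{D}_\beta(f,g)<\infty$ for some $\beta>0$, and let $h$ be defined by $g=f*h$. Then the series $\sum_{n=1}^\infty\frac{|h(n)|^2}{n^\beta}$ is convergent.
   Context: $(f*h)(n)=\sum_{dm=n}f(d)h(m)$. $\mathbb{D}_\beta(f,g)^2:=\sum_p \frac{1-\Re(f(p)\overline{g(p)})}{p^\beta}$ (sum over primes). *)

From HB Require Import structures.
From mathcomp Require Import all_boot all_order all_algebra.
From mathcomp Require Import complex.
From mathcomp Require Import all_classical all_reals all_analysis.
Set Implicit Arguments. Unset Strict Implicit. Unset Printing Implicit Defensive.
Import Order.TTheory GRing.Theory Num.Theory.
Import numFieldNormedType.Exports.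
Local Open Scope ring_scope.

Definition dconv (R : realType) (f h : nat -> R[i]) (n : nat) : R[i] :=
  \sum_(d <- divisors n) f d * h (n %/ d)%N.

Definition completely_multiplicative (R : realType) (f : nat -> R[i]) : Prop :=
  f 1%N = 1 /\ forall m n : nat, (0 < m)%N -> (0 < n)%N -> f (m * n)%N = f m * f n.

(* k-th term of the prime sum defining D_beta(f,g)^2:
   (1 - Re(f(p) conj(g(p)))) / p^beta if p is prime, 0 otherwise. *)
Definition pretentious_term (R : realType) (beta : R) (f g : nat -> R[i]) (p : nat) : R :=
  if prime p then (1 - complex.Re (f p * conjc (g p))) / (p%:R `^ beta) else 0.

(* D_beta(f,g) < oo : the (nonnegative-term) prime series converges. *)
Definition pretentious_dist_finite (R : realType) (beta : R) (f g : nat -> R[i]) : Prop :=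
  cvgn (series (pretentious_term beta f g)).

(* The quotient [h] is multiplicative with [h (p ^ k.+1) = g(p)^k (g(p) - f(p))].
   Hence the sum of [|h n|^2 / n^beta] over the [P]-smooth [n] is at most the Euler
   product over the primes [p <= P] of the local sums [sum_j |h (p^j)|^2 / p^(j beta)].
   As [|g p - f p|^2 <= 2 (1 - Re (f p * conj (g p)))] and [p^beta >= 2^beta > 1], each
   local sum is at most [1 + K t_p <= exp (K t_p)], where [K = 2 * 2^beta / (2^beta - 1)]
   and [t_p] is the [p]-th term of [D_beta(f, g)^2]. The nondecreasing partial sums are
   therefore bounded by [exp (K D_beta(f, g)^2)]. *)

From HB Require Import structures.
From mathcomp Require Import all_boot all_order all_algebra.
From mathcomp Require Import complex.
From mathcomp Require Import all_classical all_reals all_analysis.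
From mathcomp Require Import ring lra.
Import Order.TTheory GRing.Theory Num.Theory.
Import numFieldNormedType.Exports.
Local Open Scope ring_scope.

Lemma dvdn_coprimeM_gcd m n d : coprime m n -> (d %| m * n)%N ->
  d = (gcdn d m * gcdn d n)%N.
Proof.
move=> co dv; apply/eqP; rewrite eqn_dvd; apply/andP; split.
  rewrite muln_gcdl dvdn_gcd dvdn_mulr //=.
  by rewrite muln_gcdr dvdn_gcd dvdn_mull // dvdn_mulr.
rewrite Gauss_dvd ?dvdn_gcdl //.
exact: coprime_dvdl (dvdn_gcdr _ _) (coprime_dvdr (dvdn_gcdr _ _) co).
Qed.

Lemma gcdn_coprimeM_dvd m n d1 d2 : coprime m n -> (d1 %| m)%N -> (d2 %| n)%N ->
  gcdn (d1 * d2) m = d1.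
Proof.
move=> co d1m d2n; rewrite gcdnC Gauss_gcdl; first exact/gcdn_idPr.
exact: coprime_dvdr d2n co.
Qed.

Lemma big_divisors_coprimeM (V : nmodType) m n (F : nat -> V) :
  coprime m n -> (0 < m)%N -> (0 < n)%N ->
  \sum_(d <- divisors (m * n)) F d =
  \sum_(d1 <- divisors m) \sum_(d2 <- divisors n) F (d1 * d2)%N.
Proof.
move=> co m0 n0.
rewrite -(big_allpairs (F := fun x : nat * nat => F (x.1 * x.2)%N)).
rewrite -(big_map (fun x : nat * nat => (x.1 * x.2)%N) xpredT F).
apply: perm_big; apply: uniq_perm; first exact: divisors_uniq.
- rewrite map_allpairs; apply: allpairs_uniq; try exact: divisors_uniq.
  move=> ? ? /allpairsP[[a b] [ha hb ->]] /allpairsP[[c e] [hc he ->]] /= eq.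
  move: ha hb hc he; rewrite /= -!dvdn_divisors // => ha hb hc he.
  have co' : coprime n m by rewrite coprime_sym.
  congr pair.
    rewrite -(gcdn_coprimeM_dvd _ _ _ _ co ha hb).
    by rewrite -(gcdn_coprimeM_dvd _ _ _ _ co hc he) eq.
  rewrite -(gcdn_coprimeM_dvd _ _ _ _ co' hb ha) -(gcdn_coprimeM_dvd _ _ _ _ co' he hc).
  by rewrite !(mulnC b) !(mulnC e) eq.
move=> d; rewrite -dvdn_divisors ?muln_gt0 ?m0 //; apply/idP/idP.
  move=> dv; apply/mapP; exists (gcdn d m, gcdn d n); last exact: dvdn_coprimeM_gcd dv.
  by apply/allpairsP; exists (gcdn d m, gcdn d n); rewrite -!dvdn_divisors // !dvdn_gcdr.
move=> /mapP[[a b] /allpairsP[[? ?] [ha hb [-> ->]]] ->] /=.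
by move: ha hb; rewrite -!dvdn_divisors // => ha hb; rewrite dvdn_mul.
Qed.

Lemma big_divisors2_id (V : nmodType) m n (F : nat -> nat -> V) :
  (0 < m)%N -> (0 < n)%N ->
  (forall d1 d2, (d1 %| m)%N -> (d2 %| n)%N -> (1 < d1 * d2)%N -> F d1 d2 = 0) ->
  \sum_(d1 <- divisors m) \sum_(d2 <- divisors n) F d1 d2 = F 1%N 1%N.
Proof.
move=> m0 n0 F0; have in_divisors d k : (0 < k)%N -> d \in divisors k ->
    (d %| k)%N /\ (0 < d)%N.
  by move=> k0; rewrite -dvdn_divisors // => dk; rewrite (dvdn_gt0 k0).
rewrite (bigD1_seq 1%N (divisor1 m)) ?divisors_uniq //=.
rewrite (bigD1_seq 1%N (divisor1 n)) ?divisors_uniq //= !big1_seq ?addr0 //.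
  move=> d1 /andP[d11 /(in_divisors _ _ m0)[d1m d10]].
  apply: big1_seq => d2 /andP[_ /(in_divisors _ _ n0)[d2n d20]].
  apply: F0 => //; apply: leq_trans (leq_pmulr _ d20).
  by rewrite ltn_neqAle eq_sym d11.
move=> d2 /andP[d21 /(in_divisors _ _ n0)[d2n d20]].
by apply: F0; rewrite ?dvd1n // mul1n ltn_neqAle eq_sym d21.
Qed.

Lemma big_divisors_pfactor (V : nmodType) p k (F : nat -> V) : prime p ->
  \sum_(d <- divisors (p ^ k)) F d = \sum_(i < k.+1) F (p ^ i)%N.
Proof.
move=> pp; rewrite -(big_mkord xpredT (fun i => F (p ^ i)%N)).
rewrite -(big_map (expn p) xpredT F).
apply: perm_big; apply: uniq_perm; first exact: divisors_uniq.
  by rewrite map_inj_uniq ?iota_uniq //; apply: expnI; apply: prime_gt1.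
move=> d; rewrite -dvdn_divisors ?expn_gt0 ?prime_gt0 //.
apply/idP/idP => [/(dvdn_pfactor _ _ pp)[i ik ->]|].
  by apply/mapP; exists i; rewrite // mem_index_iota.
case/mapP=> i; rewrite mem_index_iota => /andP[_ ik] ->.
by apply/(dvdn_pfactor _ _ pp); exists i.
Qed.

Lemma completely_multiplicativeX {R : realType} {f : nat -> R[i]} :
  completely_multiplicative f -> forall p k, (0 < p)%N -> f (p ^ k)%N = f p ^+ k.
Proof.
move=> [f1 fM] p k p0; elim: k => [|k IH]; first by rewrite expn0 expr0.
by rewrite expnS fM ?expn_gt0 ?p0 // IH exprS.
Qed.

Lemma dconv_coprimeM (R : realType) (f h : nat -> R[i]) m n :
  completely_multiplicative f -> coprime m n -> (0 < m)%N -> (0 < n)%N ->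
  dconv f h (m * n) = \sum_(d1 <- divisors m) \sum_(d2 <- divisors n)
      f d1 * f d2 * h (m %/ d1 * (n %/ d2))%N.
Proof.
move=> [_ fM] co m0 n0; rewrite /dconv big_divisors_coprimeM //.
rewrite big_seq [RHS]big_seq; apply: eq_bigr => d1; rewrite -dvdn_divisors // => d1m.
rewrite big_seq [RHS]big_seq; apply: eq_bigr => d2; rewrite -dvdn_divisors // => d2n.
have [d10 d20] := (dvdn_gt0 m0 d1m, dvdn_gt0 n0 d2n).
by rewrite fM // -{1}(divnK d1m) -{1}(divnK d2n) mulnACA mulnK // muln_gt0 d10.
Qed.

Section DirichletQuotient.
Context {R : realType} {f g h : nat -> R[i]}.
Hypotheses (f_cm : completely_multiplicative f) (g_cm : completely_multiplicative g).
Hypothesis g_dconv : forall n : nat, (0 < n)%N -> g n = dconv f h n.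

Lemma dquot1 : h 1%N = 1.
Proof.
have [[f1 _] [g1 _]] := (f_cm, g_cm); have := g_dconv 1%N isT.
by rewrite /dconv (_ : divisors 1 = [:: 1%N]) // big_seq1 f1 mul1r g1 divnn.
Qed.

(* Expanding [g (m n) = g m g n] as double divisor sums, all terms but the
   one at [d1 = d2 = 1] agree by induction on [m n]. *)
Lemma dquot_coprimeM m n : coprime m n -> (0 < m)%N -> (0 < n)%N ->
  h (m * n)%N = h m * h n.
Proof.
have [f1 _] := f_cm; have [_ gM] := g_cm.
suff: forall N m n, (m * n < N)%N -> coprime m n -> (0 < m)%N -> (0 < n)%N ->
  h (m * n)%N = h m * h n by apply.
elim=> // N IH {}m {}n mnN co m0 n0.
set F := fun d1 d2 =>
  f d1 * f d2 * (h (m %/ d1 * (n %/ d2))%N - h (m %/ d1)%N * h (n %/ d2)%N).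
have F_sum : \sum_(d1 <- divisors m) \sum_(d2 <- divisors n) F d1 d2 = 0.
  have := gM m n m0 n0; rewrite !g_dconv ?muln_gt0 ?m0 // dconv_coprimeM //.
  rewrite /dconv big_distrlr /= => E; rewrite /F.
  under eq_bigr do under eq_bigr do rewrite mulrBr [X in _ - X]mulrACA.
  by under eq_bigr do rewrite sumrB; rewrite sumrB E subrr.
have F_off d1 d2 : (d1 %| m)%N -> (d2 %| n)%N -> (1 < d1 * d2)%N -> F d1 d2 = 0.
  move=> d1m d2n d12; have [d10 d20] := (dvdn_gt0 m0 d1m, dvdn_gt0 n0 d2n).
  have quot : (m %/ d1 * (n %/ d2) = (m * n) %/ (d1 * d2))%N.
    by rewrite -{2}(divnK d1m) -{2}(divnK d2n) mulnACA mulnK // muln_gt0 d10.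
  rewrite /F IH; first by rewrite subrr mulr0.
  - rewrite quot; apply: leq_trans (ltn_Pdiv d12 _) _; first by rewrite muln_gt0 m0.
    by rewrite -ltnS.
  - exact: coprime_dvdl (dvdn_div d1m) (coprime_dvdr (dvdn_div d2n) co).
  - by rewrite divn_gt0 // dvdn_leq.
  - by rewrite divn_gt0 // dvdn_leq.
move: F_sum; rewrite big_divisors2_id // /F f1 !mul1r !divn1 => /eqP.
by rewrite subr_eq0 => /eqP.
Qed.

Lemma dquot_pfactor p k : prime p -> h (p ^ k.+1)%N = g p ^+ k * (g p - f p).
Proof.
move=> pp; have p0 := prime_gt0 pp; have [f1 _] := f_cm.
have g_pfactor j : g (p ^ j)%N = \sum_(i < j.+1) f (p ^ i)%N * h (p ^ (j - i))%N.
  rewrite g_dconv ?expn_gt0 ?p0 // /dconv big_divisors_pfactor //.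
  by apply: eq_bigr => i _; rewrite -expnB // -ltnS.
have tail : \sum_(i < k.+1) f (p ^ bump 0 i)%N * h (p ^ (k.+1 - bump 0 i))%N
    = f p * g (p ^ k)%N.
  rewrite g_pfactor mulr_sumr; apply: eq_bigr => i _.
  by rewrite /bump add1n subSS !(completely_multiplicativeX f_cm _ _ p0) exprS mulrA.
have := g_pfactor k.+1; rewrite big_ord_recl expn0 f1 mul1r subn0 tail.
rewrite !(completely_multiplicativeX g_cm _ _ p0) => E.
by rewrite mulrBr -exprSr E [g p ^+ k * f p]mulrC addrK.
Qed.

End DirichletQuotient.

Definition smooth (P n : nat) : bool := all (fun q => (q <= P)%N) (primes n).

Lemma smooth0 n : (1 < n)%N -> smooth 0 n = false.
Proof.
move=> n1; apply/negbTE/allPn; exists (pdiv n); first by rewrite mem_primes pdiv_prime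
  ?pdiv_dvd // (ltn_trans _ n1).
by rewrite -ltnNge prime_gt0 // pdiv_prime.
Qed.

Lemma smoothS_nonprime P n : ~~ prime P.+1 -> smooth P.+1 n = smooth P n.
Proof.
move=> np; apply: eq_in_all => q; rewrite mem_primes => /andP[qp _].
by rewrite leq_eqVlt ltnS; case: eqP => // qP; rewrite -qP qp in np.
Qed.

Lemma smooth_coprime_dvd p n d : prime p -> (0 < n)%N -> smooth p n ->
  (d %| n)%N -> coprime p d -> smooth p.-1 d.
Proof.
move=> pp n0 sn dn pd; apply/allP => q; rewrite mem_primes => /and3P[qp d0 qd].
have qn : q \in primes n by rewrite mem_primes qp n0 (dvdn_trans qd dn).
have := allP sn q qn; rewrite leq_eqVlt => /orP[/eqP qpe|qp'].
  by move: pd; rewrite prime_coprime // -qpe qd.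
by rewrite -ltnS prednK ?prime_gt0.
Qed.

Lemma logn_decomp p n : prime p -> (0 < n)%N ->
  [/\ n = (p ^ logn p n * (n %/ p ^ logn p n))%N, coprime p (n %/ p ^ logn p n),
      (0 < n %/ p ^ logn p n <= n)%N & (logn p n < n)%N].
Proof.
move=> pp n0; have [m pm n_eq] := pfactor_coprime pp n0.
have pe0 : (0 < p ^ logn p n)%N by rewrite expn_gt0 prime_gt0.
have -> : (n %/ p ^ logn p n = m)%N by rewrite {1}n_eq mulnK.
have m0 : (0 < m)%N by move: n0; rewrite n_eq muln_gt0 => /andP[].
split => //; first by rewrite mulnC.
  by rewrite m0 {1}n_eq leq_pmulr.
by rewrite (leq_trans (ltn_expl _ (prime_gt1 pp))) // dvdn_leq // pfactor_dvdnn.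
Qed.

Lemma ler_sum_inj (R : numDomainType) (I J : finType) (A : {pred I}) (B : {pred J})
    (phi : I -> J) (G : J -> R) :
  {in A &, injective phi} -> {in A, forall i, phi i \in B} ->
  {in B, forall j, 0 <= G j} ->
  \sum_(i in A) G (phi i) <= \sum_(j in B) G j.
Proof.
move=> inj AB G0; rewrite -(big_imset _ inj) /=.
rewrite [leRHS](bigID (mem (phi @: A))) /= -[leLHS]addr0 lerD //.
  rewrite le_eqVlt; apply/orP; left; apply/eqP; apply: eq_bigl => j.
  by case: (boolP (j \in phi @: A)) => [/imsetP[i iA ->]|]; rewrite ?AB ?andbT ?andbF.
by apply: sumr_ge0 => j /andP[/G0].
Qed.

Section EulerProduct.
Context {R : numDomainType} {a : nat -> R}.
Hypotheses (a_ge0 : forall n, 0 <= a n) (a1 : a 1%N = 1).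
Hypothesis a_coprimeM : forall m n, coprime m n -> (0 < m)%N -> (0 < n)%N ->
  a (m * n)%N = a m * a n.

(* Each [p]-smooth [n] is uniquely [p ^ e * m] with [m] being [p.-1]-smooth. *)
Lemma sum_smooth_prime_le p M : prime p ->
  \sum_(k < M | smooth p k.+1) a k.+1 <=
  (\sum_(j < M) a (p ^ j)%N) * \sum_(l < M | smooth p.-1 l.+1) a l.+1.
Proof.
move=> pp; case: M => [|M]; first by rewrite !big_ord0 mul0r.
pose phi (k : 'I_M.+1) : 'I_M.+1 * 'I_M.+1 :=
  (inord (logn p k.+1), inord (k.+1 %/ p ^ logn p k.+1).-1).
have phiK (k : 'I_M.+1) :
    k.+1 = (p ^ (phi k).1 * ((phi k).2).+1)%N /\ coprime p ((phi k).2).+1.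
  have [k_eq pm /andP[m0 mk] ek] := logn_decomp _ _ pp (ltn0Sn k).
  have kM := ltn_ord k.
  by rewrite /= !inordK ?prednK ?(leq_trans ek kM) ?(leq_trans mk kM).
set B := [pred x : 'I_M.+1 * 'I_M.+1 | smooth p.-1 (x.2).+1].
set G := fun x : 'I_M.+1 * 'I_M.+1 => a (p ^ x.1)%N * a (x.2).+1.
have -> : \sum_(k < M.+1 | smooth p k.+1) a k.+1 =
    \sum_(k : 'I_M.+1 | smooth p k.+1) G (phi k).
  apply: eq_bigr => k _; have [k_eq pm] := phiK k.
  by rewrite [in LHS]k_eq a_coprimeM ?expn_gt0 ?(prime_gt0 pp) ?coprimeXl.
have -> : (\sum_(j < M.+1) a (p ^ j)%N) * \sum_(l < M.+1 | smooth p.-1 l.+1) a l.+1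
    = \sum_(x in B) G x.
  by rewrite big_distrlr /= pair_big /=; apply: eq_bigl => -[j l].
apply: ler_sum_inj => [k1 k2 _ _ E|k sk|x _]; last by rewrite mulr_ge0.
  have [[k1_eq _] [k2_eq _]] := (phiK k1, phiK k2).
  by apply/val_inj/succn_inj; rewrite k1_eq k2_eq E.
have [k_eq pm] := phiK k; apply: smooth_coprime_dvd pp (ltn0Sn k) sk _ pm.
by rewrite [X in (_ %| X)%N]k_eq dvdn_mull.
Qed.

Lemma sum_smooth_le_prod (B : nat -> R) P M :
  (forall q M, prime q -> \sum_(j < M) a (q ^ j)%N <= B q) ->
  \sum_(k < M | smooth P k.+1) a k.+1 <= \prod_(q < P.+1 | prime q) B q.
Proof.
move=> aB; elim: P M => [|P IH] M.
  rewrite [leRHS]big_mkcond big_ord1 /=.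
  case: M => [|M]; first by rewrite big_ord0.
  rewrite big_mkcond big_ord_recl /= a1 big1 ?addr0 // => k _.
  by rewrite smooth0.
rewrite [leRHS]big_mkcond big_ord_recr /=.
have [pP|npP] := boolP (prime P.+1); rewrite -big_mkcond /=; last first.
  by rewrite mulr1; under eq_bigl do rewrite smoothS_nonprime //; exact: IH.
rewrite mulrC; apply: le_trans (sum_smooth_prime_le P.+1 M pP) _.
by apply: ler_pM; rewrite ?sumr_ge0 ?aB ?IH.
Qed.

End EulerProduct.

Lemma normc_ge0 (R : rcfType) (z : R[i]) : 0 <= Normc.normc z.
Proof. by case: z => a b; apply: sqrtr_ge0. Qed.

Lemma normcX (R : rcfType) (z : R[i]) k : Normc.normc (z ^+ k) = Normc.normc z ^+ k.
Proof.
elim: k => [|k IH]; first by rewrite !expr0 Normc.normc1.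
by rewrite !exprS Normc.normcM IH.
Qed.

Lemma normc_le1_sqr (R : rcfType) (a b : R) :
  Normc.normc (Complex a b) <= 1 -> a ^+ 2 + b ^+ 2 <= 1.
Proof.
move=> le1; have := exprn_ile1 2 (normc_ge0 _ _) le1.
by rewrite /= sqr_sqrtr // addr_ge0 ?sqr_ge0.
Qed.

Lemma Re_mul_conjc (R : rcfType) (a b c d : R) :
  complex.Re (Complex a b * conjc (Complex c d)) = a * c + b * d.
Proof. by rewrite /= mulrN opprK. Qed.

Lemma Re_mul_conjc_le1 {R : rcfType} {z w : R[i]} :
  Normc.normc z <= 1 -> Normc.normc w <= 1 -> complex.Re (z * conjc w) <= 1.
Proof.
case: z w => [a b] [c d] /normc_le1_sqr z1 /normc_le1_sqr w1.
rewrite Re_mul_conjc; have := sqr_ge0 (a - c); have := sqr_ge0 (b - d).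
rewrite !sqrrB; lra.
Qed.

Lemma normcB_sqr_le {R : rcfType} {z w : R[i]} :
  Normc.normc z <= 1 -> Normc.normc w <= 1 ->
  Normc.normc (w - z) ^+ 2 <= 2 * (1 - complex.Re (z * conjc w)).
Proof.
case: z w => [a b] [c d] /normc_le1_sqr z1 /normc_le1_sqr w1.
rewrite Re_mul_conjc /= sqr_sqrtr ?addr_ge0 ?sqr_ge0 // !sqrrB; lra.
Qed.

Lemma powR_gt1 (R : realType) (x y : R) : 1 < x -> 0 < y -> 1 < x `^ y.
Proof.
move=> x1 y0; have -> : 1 = 1 `^ y :> R by rewrite powR1.
by apply: gt0_ltr_powR; rewrite ?nnegrE // (le_trans ler01 (ltW x1)).
Qed.

(* The sum is at most [1 / (x - 1)], and [x / (x - 1) <= r / (r - 1)] for [x >= r]. *)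
Lemma sum_invXS_le (R : realFieldType) (r x : R) N : 1 < r <= x ->
  \sum_(j < N) x^-1 ^+ j.+1 <= r / (r - 1) * x^-1.
Proof.
case/andP=> r1 rx; have x1 := lt_le_trans r1 rx; have x0 := lt_trans ltr01 x1.
set y := x^-1; have y1 : 0 < 1 - y by rewrite subr_gt0 invf_lt1.
have geom : \sum_(j < N) y ^+ j.+1 * (1 - y) = y - y ^+ N.+1.
  elim: N => [|N IH]; first by rewrite big_ord0 expr1 subrr.
  by rewrite big_ord_recr /= IH [y ^+ N.+2]exprS; ring.
apply: le_trans (_ : y / (1 - y) <= _).
  rewrite ler_pdivlMr // mulr_suml geom lerBlDr lerDl exprn_ge0 //.
  by rewrite invr_ge0 ltW.
rewrite -subr_ge0.
have -> : r / (r - 1) * y - y / (1 - y) = (x - r) / ((r - 1) * x * (x - 1)).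
  by rewrite /y; field; rewrite !subr_eq0 (gt_eqF x1) (gt_eqF x0) (gt_eqF r1).
by rewrite divr_ge0 ?subr_ge0 // !mulr_ge0 ?subr_ge0 // ltW.
Qed.

Definition weighted_sq {R : realType} (beta : R) (h : nat -> R[i]) (n : nat) : R :=
  Normc.normc (h n) ^+ 2 / n%:R `^ beta.

Lemma weighted_sq_ge0 (R : realType) (beta : R) h n : 0 <= weighted_sq beta h n.
Proof. by rewrite divr_ge0 ?powR_ge0 ?sqr_ge0. Qed.

Section WeightedSquares.
Context {R : realType} {beta : R} {f g h : nat -> R[i]}.
Hypotheses (f_cm : completely_multiplicative f) (g_cm : completely_multiplicative g).
Hypotheses (f_le1 : forall n, (0 < n)%N -> Normc.normc (f n) <= 1)
           (g_le1 : forall n, (0 < n)%N -> Normc.normc (g n) <= 1).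
Hypothesis beta_gt0 : 0 < beta.
Hypothesis g_dconv : forall n : nat, (0 < n)%N -> g n = dconv f h n.

Let w := weighted_sq beta h.
Let t := pretentious_term beta f g.
Let r := 2%:R `^ beta.
Let K := 2 * r / (r - 1).

Let r_gt1 : 1 < r.
Proof. by apply: powR_gt1; rewrite // ltr1n. Qed.

Let K_ge0 : 0 <= K.
Proof. by rewrite divr_ge0 ?mulr_ge0 ?powR_ge0 // subr_ge0 ltW. Qed.

Lemma pretentious_term_ge0 q : 0 <= t q.
Proof.
rewrite /t /pretentious_term; case: ifP => // /prime_gt0 q0.
by rewrite divr_ge0 ?powR_ge0 // subr_ge0 Re_mul_conjc_le1 ?f_le1 ?g_le1.
Qed.

Lemma weighted_sq1 : w 1%N = 1.
Proof.
by rewrite /w /weighted_sq (dquot1 f_cm g_cm g_dconv) Normc.normc1 expr1n powR1 divr1.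
Qed.

Lemma weighted_sq_coprimeM m n : coprime m n -> (0 < m)%N -> (0 < n)%N ->
  w (m * n)%N = w m * w n.
Proof.
move=> co m0 n0; rewrite /w /weighted_sq (dquot_coprimeM f_cm g_cm g_dconv) //.
by rewrite Normc.normcM exprMn natrM powRM ?ler0n // mulf_div.
Qed.

Lemma weighted_sq_pfactor_le p k : prime p ->
  w (p ^ k.+1)%N <= Normc.normc (g p - f p) ^+ 2 * (p%:R `^ beta)^-1 ^+ k.+1.
Proof.
move=> pp; have p0 := prime_gt0 pp.
rewrite /w /weighted_sq (dquot_pfactor f_cm g_cm g_dconv) //.
rewrite Normc.normcM normcX exprMn natrX.
have pX : (p%:R ^+ k.+1) `^ beta = (p%:R `^ beta) ^+ k.+1 :> R.
  by rewrite -powR_mulrn ?ler0n // -powRrM mulrC powRrM powR_mulrn ?powR_ge0.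
rewrite pX exprVn; apply: ler_wpM2r; first by rewrite invr_ge0 exprn_ge0 ?powR_ge0.
apply: ler_piMl; first exact: sqr_ge0.
by rewrite exprn_ile1 ?exprn_ge0 ?normc_ge0 ?exprn_ile1 ?normc_ge0 ?g_le1.
Qed.

(* Since [p `^ beta >= r], the geometric tail [sum_j (p `^ beta)^-(j+1)] is at most
   [r / (r - 1) * (p `^ beta)^-1]; its coefficient [|g p - f p|^2] is at most
   [2 (1 - Re (f p * conj (g p)))]. *)
Lemma sum_weighted_sq_pfactor_le p M : prime p ->
  \sum_(j < M) w (p ^ j)%N <= 1 + K * t p.
Proof.
move=> pp; have p0 := prime_gt0 pp.
have rx : r <= p%:R `^ beta.
  by apply: ge0_ler_powR; rewrite ?nnegrE ?ler0n ?(ltW beta_gt0) // ler_nat prime_gt1.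
have t0 := pretentious_term_ge0 p.
case: M => [|M]; first by rewrite big_ord0 addr_ge0 // mulr_ge0.
rewrite big_ord_recl expn0 weighted_sq1 lerD2l.
set x := p%:R `^ beta; set D := Normc.normc (g p - f p) ^+ 2.
have D0 : 0 <= D by apply: sqr_ge0.
apply: le_trans (_ : \sum_(j < M) D * x^-1 ^+ j.+1 <= _).
  by apply: ler_sum => j _; apply: weighted_sq_pfactor_le.
rewrite -mulr_sumr; apply: le_trans (ler_wpM2l D0 (@sum_invXS_le _ r x M _)) _.
  by rewrite r_gt1.
have D_le := normcB_sqr_le (f_le1 _ p0) (g_le1 _ p0).
rewrite /t /pretentious_term pp -/x.
have -> : K * ((1 - complex.Re (f p * conjc (g p))) / x) =
    2 * (1 - complex.Re (f p * conjc (g p))) * (r / (r - 1) * x^-1).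
  by rewrite /K; ring.
apply: ler_wpM2r D_le; rewrite mulr_ge0 ?invr_ge0 ?powR_ge0 //.
by rewrite divr_ge0 ?powR_ge0 // subr_ge0 ltW.
Qed.

Lemma sum_weighted_sq_le_prod N :
  \sum_(k < N) w k.+1 <= \prod_(q < N.+1 | prime q) (1 + K * t q).
Proof.
have smoothN (k : 'I_N) : smooth N k.+1.
  apply/allP => q; rewrite mem_primes => /and3P[_ _ qk].
  exact: leq_trans (dvdn_leq (ltn0Sn k) qk) (ltn_ord k).
rewrite (eq_bigl (fun k : 'I_N => smooth N k.+1)) => [|k]; last by rewrite smoothN.
exact: (sum_smooth_le_prod (weighted_sq_ge0 _ beta h) weighted_sq1
  weighted_sq_coprimeM _ _ _ sum_weighted_sq_pfactor_le).
Qed.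

Lemma prod_Euler_factor_le_expR P : pretentious_dist_finite beta f g ->
  \prod_(q < P | prime q) (1 + K * t q) <= expR (K * limn (series t)).
Proof.
move=> t_cvg.
have t_le_lim : \sum_(q < P) t q <= limn (series t).
  rewrite -(big_mkord xpredT t); apply: nondecreasing_cvgn_le t_cvg P.
  by apply: nondecreasing_series => n _ _; apply: pretentious_term_ge0.
apply: le_trans (_ : \prod_(q < P | prime q) expR (K * t q) <= _).
  apply: ler_prod => q _; rewrite expR_ge1Dx andbT.
  by rewrite addr_ge0 // mulr_ge0 // pretentious_term_ge0.
rewrite -expR_sum ler_expR -mulr_sumr ler_wpM2l //; apply: le_trans t_le_lim.
rewrite [leRHS](bigID (fun q : 'I_P => prime q)) /= lerDl.
by apply: sumr_ge0 => q _; apply: pretentious_term_ge0.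
Qed.

End WeightedSquares.

Theorem lemma2 (R : realType) (beta : R) (f g h : nat -> R[i]) :
  completely_multiplicative f -> completely_multiplicative g ->
  (forall n : nat, (0 < n)%N -> Normc.normc (f n) <= 1) ->
  (forall n : nat, (0 < n)%N -> Normc.normc (g n) <= 1) ->
  0 < beta ->
  pretentious_dist_finite beta f g ->
  (forall n : nat, (0 < n)%N -> g n = dconv f h n) ->
  cvgn (series (fun k : nat => Normc.normc (h k.+1) ^+ 2 / ((k.+1)%:R `^ beta))).
Proof.
move=> f_cm g_cm f_le1 g_le1 beta_gt0 t_cvg g_dconv.
apply: nondecreasing_is_cvgn.
  by apply: nondecreasing_series => k _ _; apply: weighted_sq_ge0.
exists (expR (2 * 2%:R `^ beta / (2%:R `^ beta - 1) *
              limn (series (pretentious_term beta f g)))) => _ [N _ <-].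
rewrite /series /= big_mkord.
apply: le_trans (sum_weighted_sq_le_prod f_cm g_cm f_le1 g_le1 beta_gt0 g_dconv N) _.
exact: prod_Euler_factor_le_expR.
Qed.
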